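(* For every $m\in\mathbb{N}$ and $\boldsymbol{X}\in\mathbb{N}^m$, $$\frac{\|\widehat{\boldsymbol{\mu}}_m\|_{1/2}^{1/2}}{\sqrt{2\pi m}}-\frac32\sqrt{\frac1{2\pi}}\frac{1}{m^{3/2}}N(\widehat{\boldsymbol{\mu}}_m)\le\hat{\mathfrak{R}}_m(\boldsymbol{X})\le\frac{\|\widehat{\boldsymbol{\mu}}_m\|_{1/2}^{1/2}}{\sqrt{2\pi m}}+\sqrt{\frac1{2\pi}}\frac{1}{m^{3/2}}N(\widehat{\boldsymbol{\mu}}_m),$$ where $N(\widehat{\boldsymbol{\mu}}_m):=\sum_{x\in\mathbb{N}:\,\widehat{\boldsymbol{\mu}}_m(x)>0}\widehat{\boldsymbol{\mu}}_m(x)^{-1/2}$.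
   Context: $\widehat{\boldsymbol{\mu}}_m(i)=\frac1m\sum_{t=1}^m\mathbb{I}\{X_t=i\}$. $\|\boldsymbol{\mu}\|_{1/2}=(\sum_i\sqrt{\boldsymbol{\mu}(i)})^2$. $\hat{\mathfrak{R}}_m(\boldsymbol{X})=\mathbb{E}_{\boldsymbol{\sigma}}\big[\sup_{f:\mathbb{N}\to\{0,1\}}\frac1m\sum_{t=1}^m\sigma_tf(X_t)\big]$ with $\boldsymbol{\sigma}$ uniform on $\{-1,1\}^m$. *)

From HB Require Import structures.
From mathcomp Require Import all_boot all_order all_algebra.
From mathcomp Require Import all_classical all_reals all_analysis.
Set Implicit Arguments. Unset Strict Implicit. Unset Printing Implicit Defensive.
Import Order.TTheory GRing.Theory Num.Theory.
Local Open Scope ring_scope.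

Section Defs.
Variable R : realType.

Definition emp_meas (m : nat) (X : 'I_m -> nat) (i : nat) : R :=
  m%:R^-1 * (\sum_(t < m) (X t == i)%:R).

Definition emp_supp (m : nat) (X : 'I_m -> nat) : seq nat :=
  undup [seq X t | t <- enum 'I_m].

(* ||mu||_{1/2} = (sum_i sqrt(mu i))^2 ; the sum over all i in N reduces to
   the finite support since the other terms are 0 *)
Definition half_norm (m : nat) (X : 'I_m -> nat) : R :=
  (\sum_(i <- emp_supp X) Num.sqrt (emp_meas X i)) ^+ 2.

Definition Nmu (m : nat) (X : 'I_m -> nat) : R :=
  \sum_(x <- emp_supp X | 0 < emp_meas X x) (emp_meas X x) `^ (- (1/2)).

Definition rsign (b : bool) : R := if b then 1 else -1.

Definition rad_sup (m : nat) (X : 'I_m -> nat) (s : {ffun 'I_m -> bool}) : R :=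
  sup [set (m%:R^-1 * \sum_(t < m) rsign (s t) * (f (X t))%:R)
      | f in [set: nat -> bool]].

Definition emp_rademacher (m : nat) (X : 'I_m -> nat) : R :=
  (2 ^+ m)^-1 * \sum_(s : {ffun 'I_m -> bool}) rad_sup X s.

End Defs.

From HB Require Import structures.
From mathcomp Require Import all_boot all_order all_algebra.
From mathcomp Require Import all_classical all_reals all_analysis.
From mathcomp Require Import ring lra.
Import Order.TTheory GRing.Theory Num.Theory.
Local Open Scope ring_scope.

(* For fixed signs s, the supremum over f : N -> {0,1} of
   (1/m) sum_t s_t f(X_t) is attained by choosing f(i) = 1 exactly when the
   signs on the level set {t | X_t = i} sum to a positive number; averaging
   over the signs, each value i of the sample with n_i = m mu(i) occurrences
   therefore contributes E (S_(n_i))^+ / m, where S_n is the simple random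
   walk.  The mean positive part satisfies E (S_(n+1))^+ = E (S_n)^+ +
   P(S_n = 0) / 2, whence E (S_2k)^+ = k c_k and E (S_(2k+1))^+ =
   (k+1) c_(k+1) with c_k = C(2k, k) / 4^k.  Wallis' inequalities for c_k,
   obtained from the decreasing integrals int_0^(pi/2) sin^n, then give
   n - 3/2 <= E (S_n)^+ sqrt(2 pi n) <= n + 1, which is the per-value form of
   the theorem; summing over the support of mu yields corollary1. *)

Section Wallis.
Variable R : realType.

(* A primitive of sin^n, given by the reduction formula
   int sin^(n+2) = - sin^(n+1) cos / (n+2) + (n+1)/(n+2) int sin^n. *)
Fixpoint sinpow_prim (n : nat) : R -> R :=
  match n with
  | 0 => id
  | 1 => - cos
  | n'.+2 => (n'.+2%:R)^-1 *: (- ((sin ^+ n'.+1) * cos))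
             + (n'.+1%:R / n'.+2%:R) *: sinpow_prim n'
  end.

Lemma is_derive_sinpow_prim n (x : R) :
  is_derive x 1 (sinpow_prim n) (sin x ^+ n).
Proof.
(* Both parities at once, so that the derivative of sinpow_prim k is
   available to instance search when differentiating sinpow_prim k.+2. *)
suff both k : is_derive x 1 (sinpow_prim k) (sin x ^+ k) /\
              is_derive x 1 (sinpow_prim k.+1) (sin x ^+ k.+1) by case: (both n).
elim: k => [|k [IHk IHk1]]; split.
- by apply: is_derive_eq; rewrite expr0.
- by apply: is_derive_eq; rewrite /= expr1 opprK.
- exact: IHk1.
apply: is_derive_eq.
have scaleE (a b : R) : a *: b = a * b by [].
rewrite exprfctE !scaleE.
have sc := cos2sin2 x.
have k2 : (k.+2%:R : R) != 0 by rewrite pnatr_eq0.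
set s := sin x in sc *; set c := cos x in sc *.
transitivity (k.+2%:R^-1 * - (s ^+ k.+1 * - s + k.+1%:R * s ^+ k * c ^+ 2)
              + (k.+1%:R / k.+2%:R) * s ^+ k); first by rewrite /=; ring.
rewrite sc !exprS expr0 mulr1; set K := (k.+2%:R : R).
have -> : (k.+1%:R : R) = K - 1 by rewrite /K !mulrS; ring.
by field.
Qed.

Definition wallis n : R := sinpow_prim n (pi / 2) - sinpow_prim n 0.

Lemma wallis0 : wallis 0 = pi / 2.
Proof. by rewrite /wallis /= subr0. Qed.

Lemma wallis1 : wallis 1 = 1.
Proof. by rewrite /wallis /= !fctE cos_pihalf cos0 oppr0 sub0r opprK. Qed.

(* The boundary term of the reduction formula vanishes at 0 and pi/2. *)
Lemma wallisSS n : wallis n.+2 = (n.+1%:R / n.+2%:R) * wallis n.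
Proof.
rewrite /wallis /= !fctE cos_pihalf sin0 expr0n /=.
by rewrite mulr0 mul0r oppr0 !scaler0 !add0r -scalerBr.
Qed.

(* W is nonincreasing, since sin^(n+1) <= sin^n on [0, pi/2]: the difference
   of the primitives is nondecreasing there. *)
Lemma wallis_decr n : wallis n.+1 <= wallis n.
Proof.
set G := sinpow_prim n - sinpow_prim n.+1.
have dG (x : R) : is_derive x 1 G (sin x ^+ n - sin x ^+ n.+1).
  by apply: is_deriveB; apply: is_derive_sinpow_prim.
have derG (x : R) : derivable G x 1 by case: (dG x).
have pi0 := pi_gt0 R.
have : G 0 <= G (pi / 2).
  apply: (@ger0_derive1_ndecr R G 0 (pi / 2)) => //.
  - move=> x; rewrite in_itv /= => /andP[x0 xpi2].
    have sx0 : 0 <= sin x by apply: sin_ge0_pi; rewrite ltW //=; lra.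
    by rewrite derive1E derive_val subr_ge0 exprS ler_piMl ?exprn_ge0 ?sin_le1.
  - by apply: derivable_within_continuous => x _; exact: derG.
  - by rewrite divr_ge0 ?pi_ge0.
by rewrite /G /wallis /= !fctE /=; lra.
Qed.

Definition cbin k : R := 'C(k.*2, k)%:R / 4 ^+ k.

Lemma cbin_gt0 k : 0 < cbin k.
Proof. by rewrite /cbin divr_gt0 ?exprn_gt0 // ltr0n bin_gt0 -addnn leq_addl. Qed.

(* c_(k+1) (2k+2) = c_k (2k+1), from C(2k+2, k+1) = 2 C(2k+1, k) and
   (k+1) C(2k+1, k) = (2k+1) C(2k, k). *)
Lemma cbinS k : cbin k.+1 * k.+1.*2%:R = cbin k * k.*2.+1%:R.
Proof.
have h1 := mul_bin_diag k.*2.+2 k.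
have h2 := mul_bin_down k.*2.+1 k.
have e : (k.*2.+1 - k = k.+1)%N by rewrite -addnn -addSn addnK.
rewrite /= e in h1 h2.
move/(congr1 (fun n => n%:R : R)): h1; rewrite !natrM => h1.
move/(congr1 (fun n => n%:R : R)): h2; rewrite !natrM => h2.
have k1 : (k.+1%:R : R) != 0 by rewrite pnatr_eq0.
have k2 : (k.*2.+1%:R : R) != 0 by rewrite pnatr_eq0.
have d2 : (k.*2.+2%:R : R) = 2 * k.+1%:R by rewrite -doubleS -muln2 natrM mulrC.
rewrite /cbin doubleS exprS d2 in h1 *.
set a := ('C(k.*2.+2, k.+1)%:R : R) in h1 *.
set b := ('C(k.*2.+1, k)%:R : R) in h1 h2 *.
set c := ('C(k.*2, k)%:R : R) in h2 *.
have -> : a = 2 * b by apply: (mulIf k1); rewrite mulrC -h1; ring.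
have -> : c = k.+1%:R * b / k.*2.+1%:R by rewrite -h2; field.
by field; rewrite addrC natr1 k2 andbT expf_neq0 // pnatr_eq0.
Qed.

Lemma wallis_cbin k :
  wallis k.*2 = pi / 2 * cbin k /\ wallis k.*2.+1 * (k.*2.+1%:R * cbin k) = 1.
Proof.
elim: k => [|k [IHe IHo]].
  by rewrite /= wallis0 wallis1 /cbin /= bin0 expr0 !divr1 !mulr1.
have k2 : (k.*2.+2%:R : R) != 0 by rewrite pnatr_eq0.
have k3 : (k.*2.+3%:R : R) != 0 by rewrite pnatr_eq0.
have cS : cbin k.+1 = cbin k * k.*2.+1%:R / k.*2.+2%:R.
  by rewrite -cbinS doubleS; field.
rewrite doubleS cS !wallisSS; split; first by rewrite IHe; field.
rewrite -[RHS]IHo.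
have k0 : (0 : R) <= k.*2%:R := ler0n _ _.
field.
by repeat (apply/andP; split); apply: lt0r_neq0; lra.
Qed.

(* Wallis' inequalities, from W(2k+1) <= W(2k) and W(2k+2) <= W(2k+1):
   2 <= pi (2k+1) c_k^2 and pi k c_k^2 <= 1. *)
Lemma wallis_lower k : 2 <= pi * k.*2.+1%:R * cbin k ^+ 2.
Proof.
have [We Wo] := wallis_cbin k.
have c0 := cbin_gt0 k.
have p : 0 <= k.*2.+1%:R * cbin k :> R by rewrite mulr_ge0 // ltW.
have := ler_wpM2r p (wallis_decr k.*2).
rewrite Wo We => h.
have -> : pi * k.*2.+1%:R * cbin k ^+ 2
        = 2 * (pi / 2 * cbin k * (k.*2.+1%:R * cbin k)) by field.
lra.
Qed.

Lemma wallis_upper k : pi * k%:R * cbin k ^+ 2 <= 1.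
Proof.
case: k => [|k]; first by rewrite mulr0 mul0r ler01.
have [_ Wo] := wallis_cbin k.
have [We _] := wallis_cbin k.+1.
have c0 := cbin_gt0 k.+1.
have p : 0 <= cbin k.+1 * k.+1.*2%:R :> R by rewrite mulr_ge0 // ltW.
have Wo' : wallis k.*2.+1 * (cbin k.+1 * k.+1.*2%:R) = 1.
  by rewrite cbinS (mulrC (cbin k)).
have := ler_wpM2r p (wallis_decr k.*2.+1).
rewrite -doubleS We Wo'.
have -> : pi * k.+1%:R * cbin k.+1 ^+ 2
        = pi / 2 * cbin k.+1 * (cbin k.+1 * k.+1.*2%:R).
  by rewrite -muln2 natrM; field.
by [].
Qed.

End Wallis.

Section RandomWalk.
Variable R : realType.

(* The expectation E g(S_n) for the simple random walk S_n (a sum of n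
   independent uniform signs): S_n = 2k - n with probability C(n, k) / 2^n. *)
Definition walk_avg (n : nat) (g : R -> R) : R :=
  (2 ^+ n)^-1 * \sum_(k < n.+1) 'C(n, k)%:R * g (k.*2%:R - n%:R).

(* Conditioning on the last step: S_(n+1) = S_n + 1 or S_n - 1 equally likely. *)
Lemma walk_avgS n g :
  walk_avg n.+1 g = walk_avg n (fun x => (g (x + 1) + g (x - 1)) / 2).
Proof.
rewrite /walk_avg.
set f := fun k : nat => g (k.*2%:R - n.+1%:R).
rewrite -[\sum_(k < n.+2) _]/(\sum_(k < n.+2) 'C(n.+1, k)%:R * f k).
rewrite big_ord_recl /=.
under eq_bigr do rewrite binS natrD mulrDl.
rewrite big_split /= addrA.
have -> : 'C(n.+1, 0)%:R * f 0%N + \sum_(i < n.+1) 'C(n, bump 0 i)%:R * f (bump 0 i)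
        = \sum_(k < n.+2) 'C(n, k)%:R * f k :> R.
  by rewrite [in RHS]big_ord_recl /= !bin0.
rewrite big_ord_recr /= bin_small // mul0r addr0.
rewrite exprSr invfM -mulrA; congr (_ * _).
rewrite addrC -big_split mulrC mulr_suml; apply: eq_bigr => i _ /=.
rewrite -mulrDr -mulrA; congr (_ * _).
rewrite /f /bump /= add1n.
by congr ((g _ + g _) / 2); rewrite ?doubleS -!natr1; ring.
Qed.

Lemma eq_walk_avg n (f g : R -> R) :
  (forall k : nat, (k <= n)%N -> f (k.*2%:R - n%:R) = g (k.*2%:R - n%:R)) ->
  walk_avg n f = walk_avg n g.
Proof.
move=> fg; rewrite /walk_avg; congr (_ * _); apply: eq_bigr => k _.
by rewrite fg // -ltnS ltn_ord.
Qed.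

Lemma walk_avg_lin n a (f h : R -> R) :
  walk_avg n (fun x => f x + a * h x) = walk_avg n f + a * walk_avg n h.
Proof.
rewrite /walk_avg mulrCA -mulrDr; congr (_ * _).
rewrite mulr_sumr -big_split /=; apply: eq_bigr => k _.
by rewrite mulrDr mulrCA.
Qed.

Variable m : nat.

Definition sign_sum (A : {set 'I_m}) (s : {ffun 'I_m -> bool}) : R :=
  \sum_(t in A) rsign R (s t).

Definition flip_at (t0 : 'I_m) (s : {ffun 'I_m -> bool}) : {ffun 'I_m -> bool} :=
  [ffun t => if t == t0 then ~~ s t else s t].

Lemma flip_atK t0 : involutive (flip_at t0).
Proof.
move=> s; apply/ffunP => t; rewrite !ffunE.
by case: eqP => // ->; rewrite negbK.
Qed.

(* Pairing s with flip_at t0 s: the coordinate t0 in A contributes +1 or -1,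
   independently of the signs in A minus t0. *)
Lemma sum_sign_sum_D1 (A : {set 'I_m}) t0 (g : R -> R) : t0 \in A ->
  \sum_(s : {ffun 'I_m -> bool}) g (sign_sum A s) =
  \sum_(s : {ffun 'I_m -> bool})
     (g (sign_sum (A :\ t0) s + 1) + g (sign_sum (A :\ t0) s - 1)) / 2.
Proof.
move=> t0A.
have split_t0 s : sign_sum A s = rsign R (s t0) + sign_sum (A :\ t0) s.
  by rewrite /sign_sum (big_setD1 _ t0A).
have flip_rest s : sign_sum (A :\ t0) (flip_at t0 s) = sign_sum (A :\ t0) s.
  apply: eq_bigr => t; rewrite in_setD1 => /andP[tt0 _].
  by rewrite ffunE (negbTE tt0).
set h := fun s => g (sign_sum A s).
have reflect_sum : \sum_(s : {ffun 'I_m -> bool}) h s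
                 = \sum_(s : {ffun 'I_m -> bool}) h (flip_at t0 s).
  exact: (reindex_inj (can_inj (flip_atK t0))).
have two : (2 : R) != 0 by rewrite pnatr_eq0.
apply: (mulIf two); rewrite !mulr_suml.
under eq_bigr do rewrite mulr_natr mulr2n.
rewrite big_split /= [X in _ + X]reflect_sum -big_split /=.
apply: eq_bigr => s _.
rewrite divfK // /h !split_t0 flip_rest ffunE eqxx.
by case: (s t0); rewrite /rsign /= (addrC 1) (addrC (-1)) // addrC.
Qed.

Lemma avg_sign_sum (A : {set 'I_m}) g :
  (2 ^+ m)^-1 * \sum_(s : {ffun 'I_m -> bool}) g (sign_sum A s) = walk_avg #|A| g.
Proof.
move cardA : #|A| => n; elim: n A g cardA => [|n IH] A g cardA.
  have -> : A = finset.set0 by apply: cards0_eq.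
  have card_signs : #|{ffun 'I_m -> bool}| = (2 ^ m)%N.
    by rewrite card_ffun card_bool card_ord.
  rewrite (eq_bigr (fun=> g 0)) => [|s _]; last by rewrite /sign_sum big_set0.
  rewrite sumr_const card_signs -[g 0 *+ _]mulr_natl natrX mulKf ?expf_neq0 ?pnatr_eq0 //.
  by rewrite /walk_avg big_ord1 /= bin0 expr0 invr1 !mul1r subrr.
have [t0 t0A] : exists t0, t0 \in A by apply/set0Pn; rewrite -card_gt0 cardA.
have cardA' : #|A :\ t0| = n.
  by move: cardA; rewrite (cardsD1 t0 A) t0A add1n => -[].
by rewrite walk_avgS -(IH (A :\ t0)) // (sum_sign_sum_D1 A t0 g t0A).
Qed.

End RandomWalk.

Section PositivePart.
Variable R : realType.

Definition pos_part (x : R) : R := Num.max 0 x.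

Lemma pos_part_id x : 0 <= x -> pos_part x = x.
Proof. exact: max_r. Qed.

Lemma pos_part_0 x : x <= 0 -> pos_part x = 0.
Proof. exact: max_l. Qed.

(* The discrete "Tanaka formula": at points of the lattice Z, averaging
   x^+ over the two neighbours adds half of the indicator of 0. *)
Lemma pos_part_step x : x = 0 \/ 1 <= `|x| ->
  (pos_part (x + 1) + pos_part (x - 1)) / 2 = pos_part x + (x == 0)%:R / 2.
Proof.
case=> [->|x1].
  rewrite eqxx add0r sub0r (@pos_part_id 1) ?ler01 // (@pos_part_0 (-1)) ?lerN10 //.
  by rewrite (@pos_part_id 0) // addr0 add0r.
have x_neq0 : x != 0 by apply: contraTneq x1 => ->; rewrite normr0 ler10.
rewrite (negbTE x_neq0) mul0r addr0.
case: (lerP 0 x) => x0.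
  by rewrite ger0_norm // in x1; rewrite !pos_part_id //; lra.
by rewrite ltr0_norm // in x1; rewrite !pos_part_0 //; lra.
Qed.

Lemma natr_sub_lattice (a b : nat) :
  (a%:R - b%:R : R) = 0 \/ 1 <= `|a%:R - b%:R : R|.
Proof.
case: (ltngtP a b) => [ab|ba|->]; last by left; rewrite subrr.
- have : (a.+1%:R <= b%:R :> R) by rewrite ler_nat.
  by rewrite -natr1 => ab'; right; rewrite ler0_norm; lra.
- have : (b.+1%:R <= a%:R :> R) by rewrite ler_nat.
  by rewrite -natr1 => ba'; right; rewrite ger0_norm; lra.
Qed.

Definition walk_pos n : R := walk_avg R n pos_part.
Definition walk_zero n : R := walk_avg R n (fun x => (x == 0)%:R).

Lemma walk_posS n : walk_pos n.+1 = walk_pos n + walk_zero n / 2.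
Proof.
rewrite /walk_pos /walk_zero (walk_avgS R) mulrC -(walk_avg_lin R).
apply: (eq_walk_avg R) => k _.
by rewrite pos_part_step ?[2^-1 * _]mulrC //; exact: natr_sub_lattice.
Qed.

Lemma walk_zero_odd k : walk_zero k.*2.+1 = 0.
Proof.
rewrite /walk_zero /walk_avg big1 ?mulr0 // => j _.
rewrite subr_eq0 eqr_nat; case: eqP => [/(congr1 odd)|_]; last by rewrite mulr0.
by rewrite /= !odd_double.
Qed.

Lemma walk_zero_even k : walk_zero k.*2 = cbin R k.
Proof.
have kk : (k < k.*2.+1)%N by rewrite ltnS -addnn leq_addl.
rewrite /walk_zero /walk_avg (bigD1 (Ordinal kk)) //= big1 ?addr0; last first.
  move=> j jk; rewrite subr_eq0 eqr_nat; case: eqP => [e|_]; last by rewrite mulr0.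
  by case/eqP: jk; apply: val_inj; apply: double_inj.
rewrite subrr eqxx mulr1 /cbin mulrC; congr (_ * _).
by rewrite -mul2n exprM expr2 -natrM.
Qed.

Lemma walk_pos_cbin k :
  walk_pos k.*2 = k%:R * cbin R k /\ walk_pos k.*2.+1 = k.+1%:R * cbin R k.+1.
Proof.
have W0 : walk_pos 0 = 0.
  by rewrite /walk_pos /walk_avg big_ord1 /= subr0 pos_part_id ?mulr0.
elim: k => [|k [_ IHo]].
  rewrite /= W0 mul0r; split => //.
  rewrite walk_posS W0 walk_zero_even add0r mul1r.
  have := cbinS R 0; rewrite /= mulr1 => c1.
  by rewrite -c1 mulfK ?pnatr_eq0.
have Eeven : walk_pos k.+1.*2 = k.+1%:R * cbin R k.+1.
  by rewrite doubleS walk_posS IHo walk_zero_odd mul0r addr0.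
split => //; rewrite walk_posS Eeven walk_zero_even.
have c2 := cbinS R k.+1.
have -> : k.+2%:R * cbin R k.+2 = cbin R k.+2 * k.+2.*2%:R / 2.
  by rewrite -muln2 natrM; field.
by rewrite c2 !doubleS -!natr1 -muln2 natrM; field.
Qed.

End PositivePart.

Section Asymptotics.
Variable R : realType.

Lemma ler_of_sqr_le (v u : R) : 0 <= u -> v ^+ 2 <= u ^+ 2 -> v <= u.
Proof. by move=> u0 vu; nra. Qed.

(* The squared bounds in the two parities.  Writing u^2 = E (S_n)^+^2 2 pi n
   as a polynomial in k times P = pi c^2, the lower bound follows from
   wallis_lower and the upper bound from wallis_upper. *)
Lemma walk_pos_sqr_even k : (0 < k)%N ->
  (k.*2%:R - 3 / 2) ^+ 2 <= walk_pos R k.*2 ^+ 2 * (2 * pi * k.*2%:R)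
  <= (k.*2%:R + 1) ^+ 2.
Proof.
move=> k0; rewrite (walk_pos_cbin R k).1 -muln2 natrM.
have K1 : (1 : R) <= k%:R by rewrite ler1n.
have w1 := wallis_lower R k; have w2 := wallis_upper R k.
rewrite -[k.*2.+1%:R]natr1 -muln2 natrM in w1.
set K := (k%:R : R) in K1 w1 w2 *; set c := cbin R k in w1 w2 *.
have -> : (K * c) ^+ 2 * (2 * pi * (K * 2)) = 4 * K ^+ 3 * (pi * c ^+ 2) by ring.
rewrite -mulrA [_ * c ^+ 2]mulrC mulrA in w1.
rewrite -mulrA [K * _]mulrC mulrA in w2.
set P := pi * c ^+ 2 in w1 w2 *.
apply/andP; split; nra.
Qed.

Lemma walk_pos_sqr_odd k :
  (k.*2.+1%:R - 3 / 2) ^+ 2 <= walk_pos R k.*2.+1 ^+ 2 * (2 * pi * k.*2.+1%:R)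
  <= (k.*2.+1%:R + 1) ^+ 2.
Proof.
have k1 : (k.+1%:R : R) = k%:R + 1 by rewrite natr1.
have n1 : (k.*2.+1%:R : R) = 2 * k%:R + 1 by rewrite -[LHS]natr1 -muln2 natrM mulrC.
have n3 : (k.+1.*2.+1%:R : R) = 2 * k%:R + 3.
  by rewrite -[LHS]natr1 -muln2 natrM k1; ring.
have K0 : (0 : R) <= k%:R := ler0n _ _.
have w1 := wallis_lower R k.+1; have w2 := wallis_upper R k.+1.
rewrite n3 -mulrA [_ * cbin R _ ^+ 2]mulrC mulrA in w1.
rewrite k1 -mulrA [_ * cbin R _ ^+ 2]mulrC mulrA in w2.
rewrite (walk_pos_cbin R k).2 n1 k1.
set K := (k%:R : R) in K0 w1 w2 *; set c := cbin R k.+1 in w1 w2 *.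
have -> : ((K + 1) * c) ^+ 2 * (2 * pi * (2 * K + 1))
        = 2 * (K + 1) ^+ 2 * (2 * K + 1) * (pi * c ^+ 2) by ring.
set P := pi * c ^+ 2 in w1 w2 *.
apply/andP; split; nra.
Qed.

Lemma walk_pos_bounds n : (0 < n)%N ->
  n%:R - 3 / 2 <= walk_pos R n * Num.sqrt (2 * pi * n%:R) <= n%:R + 1.
Proof.
move=> n0.
have sq : (n%:R - 3 / 2) ^+ 2 <= walk_pos R n ^+ 2 * (2 * pi * n%:R)
          <= (n%:R + 1) ^+ 2.
  move: n0; rewrite -(odd_double_half n); case: (odd n) => /=.
    by rewrite add1n => _; exact: walk_pos_sqr_odd.
  by rewrite add0n double_gt0 => k0; exact: walk_pos_sqr_even.
have Ew0 : 0 <= walk_pos R n.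
  rewrite /walk_pos /walk_avg mulr_ge0 ?invr_ge0 ?exprn_ge0 // sumr_ge0 // => j _.
  by rewrite mulr_ge0 // /pos_part le_max lexx.
have n0' : (0 : R) <= 2 * pi * n%:R by rewrite !mulr_ge0 ?pi_ge0.
have u0 : 0 <= walk_pos R n * Num.sqrt (2 * pi * n%:R) by rewrite mulr_ge0 ?sqrtr_ge0.
have u2 : (walk_pos R n * Num.sqrt (2 * pi * n%:R)) ^+ 2
        = walk_pos R n ^+ 2 * (2 * pi * n%:R) by rewrite exprMn sqr_sqrtr.
case/andP: sq; rewrite -u2 => lo hi.
by apply/andP; split; apply: ler_of_sqr_le.
Qed.

End Asymptotics.

Section AtomBound.
Variable R : realType.
Variables m n : nat.
Hypotheses (m0 : (0 < m)%N) (n0 : (0 < n)%N).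

(* With s = sqrt(2 pi n), the two terms of the bound for an atom of mass
   mu = n/m are n / (m s) and 1 / (m s). *)
Let s : R := Num.sqrt (2 * pi * n%:R).

Let mR : (0 : R) < m%:R. Proof. by rewrite ltr0n. Qed.
Let nR : (0 : R) < n%:R. Proof. by rewrite ltr0n. Qed.
Let pi2 : (0 : R) < 2 * pi. Proof. by rewrite mulr_gt0 ?pi_gt0. Qed.

Let a : R := Num.sqrt n%:R.
Let b : R := Num.sqrt m%:R.
Let c : R := Num.sqrt (2 * pi).
Let a0 : 0 < a. Proof. by rewrite sqrtr_gt0. Qed.
Let b0 : 0 < b. Proof. by rewrite sqrtr_gt0. Qed.
Let c0 : 0 < c. Proof. by rewrite sqrtr_gt0. Qed.
Let a2 : a ^+ 2 = n%:R. Proof. by rewrite sqr_sqrtr ?ltW. Qed.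
Let b2 : b ^+ 2 = m%:R. Proof. by rewrite sqr_sqrtr ?ltW. Qed.
Let sE : s = c * a. Proof. by rewrite /s sqrtrM ?ltW. Qed.

Lemma atom_main_term :
  Num.sqrt (n%:R / m%:R) / Num.sqrt (2 * pi * m%:R) = n%:R / (m%:R * s) :> R.
Proof.
rewrite sqrtrM ?sqrtrV ?ltW // sqrtrM ?ltW // sE -/a -/b -/c -a2 -b2.
by field; rewrite !gt_eqF.
Qed.

Lemma atom_error_term :
  Num.sqrt (1 / (2 * pi)) * (1 / (m%:R `^ (3 / 2))) * (n%:R / m%:R) `^ (- (1 / 2))
  = 1 / (m%:R * s) :> R.
Proof.
have m32 : m%:R `^ (3 / 2) = b ^+ 2 * b.
  have -> : (3 / 2 : R) = 1 + 2^-1 by field.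
  rewrite powRD; last by rewrite gt_eqF ?orbT.
  by rewrite powRr1 ?powR12_sqrt ?b2 // ltW.
have mu12 : (n%:R / m%:R) `^ (- (1 / 2)) = b / a.
  rewrite powRN div1r powR12_sqrt ?divr_ge0 ?ltW //.
  by rewrite sqrtrM ?sqrtrV ?ltW // invfM invrK mulrC.
rewrite m32 mu12 div1r sqrtrV ?ltW // -/c sE -b2.
by field; rewrite !gt_eqF.
Qed.

(* An atom of mass mu = n/m contributes E (S_n)^+ / m, which is
   n/(m s) up to an error between -3/2 and 1 times 1/(m s). *)
Lemma atom_bound :
  Num.sqrt (n%:R / m%:R) / Num.sqrt (2 * pi * m%:R)
    - 3 / 2 * Num.sqrt (1 / (2 * pi)) * (1 / (m%:R `^ (3 / 2)))
      * (n%:R / m%:R) `^ (- (1 / 2))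
  <= m%:R^-1 * walk_pos R n /\
  m%:R^-1 * walk_pos R n
  <= Num.sqrt (n%:R / m%:R) / Num.sqrt (2 * pi * m%:R)
    + Num.sqrt (1 / (2 * pi)) * (1 / (m%:R `^ (3 / 2)))
      * (n%:R / m%:R) `^ (- (1 / 2)).
Proof.
rewrite -[3 / 2 * _ * _ * _]mulrA -[3 / 2 * _ * _]mulrA [X in 3 / 2 * X]mulrA.
rewrite atom_main_term atom_error_term.
have s0 : 0 < s by rewrite sE mulr_gt0.
have ms : 0 < m%:R * s by rewrite mulr_gt0.
have avg : m%:R^-1 * walk_pos R n = walk_pos R n * s / (m%:R * s).
  by field; rewrite !gt_eqF.
have [lo hi] := andP (walk_pos_bounds R n n0); rewrite -/s in lo hi.
rewrite avg; split.
- have -> : n%:R / (m%:R * s) - 3 / 2 * (1 / (m%:R * s))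
          = (n%:R - 3 / 2) / (m%:R * s).
    by field; rewrite !gt_eqF.
  by rewrite ler_wpM2r // invr_ge0 ltW.
- have -> : n%:R / (m%:R * s) + 1 / (m%:R * s) = (n%:R + 1) / (m%:R * s).
    by field; rewrite !gt_eqF.
  by rewrite ler_wpM2r // invr_ge0 ltW.
Qed.

End AtomBound.

Section Decomposition.
Variable R : realType.
Variable m : nat.
Variable X : 'I_m -> nat.

Definition level (i : nat) : {set 'I_m} := [set t | X t == i].

Lemma X_in_supp t : X t \in emp_supp X.
Proof. by rewrite mem_undup; apply: map_f; rewrite mem_enum. Qed.

Lemma card_level_gt0 i : i \in emp_supp X -> (0 < #|level i|)%N.
Proof.
rewrite mem_undup => /mapP [t _ ->].
by apply/card_gt0P; exists t; rewrite inE.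
Qed.

Lemma emp_meas_card i : emp_meas R X i = #|level i|%:R / m%:R.
Proof.
rewrite /emp_meas mulrC; congr (_ * _).
rewrite (eq_bigr (fun t => if t \in level i then 1 else 0)) => [|t _].
  by rewrite -big_mkcond sumr_const.
by rewrite inE; case: eqP.
Qed.

Lemma sum_by_levels (F : 'I_m -> R) :
  \sum_(t < m) F t = \sum_(i <- emp_supp X) \sum_(t in level i) F t.
Proof.
transitivity (\sum_(t < m) \sum_(i <- emp_supp X) (if X t == i then F t else 0)).
  apply: eq_bigr => t _.
  rewrite (bigD1_seq (X t)) /= ?undup_uniq ?X_in_supp // eqxx big1 ?addr0 // => i.
  by rewrite eq_sym => /negbTE ->.
rewrite exchange_big /=; apply: eq_bigr => i _.
by rewrite [RHS]big_mkcond /=; apply: eq_bigr => t _; rewrite inE.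
Qed.

(* For fixed signs, the supremum over f : N -> {0,1} is attained by the
   indicator of the values whose level set has a positive sign sum. *)
Lemma rad_sup_pos_part s :
  rad_sup R X s = m%:R^-1 * \sum_(i <- emp_supp X) pos_part R (sign_sum R m (level i) s).
Proof.
set V := fun f : nat -> bool => m%:R^-1 * \sum_(t < m) rsign R (s t) * (f (X t))%:R.
have Vf f : V f = m%:R^-1 * \sum_(i <- emp_supp X) (f i)%:R * sign_sum R m (level i) s.
  rewrite /V sum_by_levels; congr (_ * _); apply: eq_bigr => i _.
  rewrite /sign_sum mulr_sumr; apply: eq_bigr => t; rewrite inE => /eqP ->.
  by rewrite mulrC.
set M := m%:R^-1 * _.
have ub f : V f <= M.
  rewrite Vf /M ler_wpM2l ?invr_ge0 // ler_sum // => i _.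
  by case: (f i); rewrite ?mul1r ?mul0r /pos_part le_max lexx ?orbT.
set fopt := fun i => 0 < sign_sum R m (level i) s.
have Vopt : V fopt = M.
  rewrite Vf /M; congr (_ * _); apply: eq_bigr => i _.
  rewrite /fopt; case: ltP => h /=; first by rewrite mul1r pos_part_id // ltW.
  by rewrite mul0r pos_part_0.
apply/eqP; rewrite eq_le; apply/andP; split.
  by apply: ge_sup => [|y [f _ <-]]; [exists (V fopt), fopt | exact: ub].
rewrite -Vopt; apply: ub_le_sup; last by exists fopt.
by exists M => y [f _ <-]; exact: ub.
Qed.

Lemma emp_rademacher_walk :
  emp_rademacher R X = m%:R^-1 * \sum_(i <- emp_supp X) walk_pos R #|level i|.
Proof.
rewrite /emp_rademacher; under eq_bigr do rewrite rad_sup_pos_part.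
rewrite -mulr_sumr mulrCA; congr (_ * _).
rewrite exchange_big /= mulr_sumr; apply: eq_bigr => i _.
exact: avg_sign_sum.
Qed.

End Decomposition.

Theorem corollary1 (R : realType) (m : nat) (hm : (0 < m)%N) (X : 'I_m -> nat) :
  Num.sqrt (half_norm R X) / Num.sqrt (2 * pi * m%:R)
    - 3 / 2 * Num.sqrt (1 / (2 * pi)) * (1 / (m%:R `^ (3 / 2))) * Nmu R X
  <= emp_rademacher R X
  /\
  emp_rademacher R X
  <= Num.sqrt (half_norm R X) / Num.sqrt (2 * pi * m%:R)
    + Num.sqrt (1 / (2 * pi)) * (1 / (m%:R `^ (3 / 2))) * Nmu R X.
Proof.
have sqrt_norm : Num.sqrt (half_norm R X)
               = \sum_(i <- emp_supp X) Num.sqrt (emp_meas R X i).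
  by rewrite /half_norm sqrtr_sqr ger0_norm // sumr_ge0 // => i _; exact: sqrtr_ge0.
(* every value in the support has positive empirical mass *)
have NmuE : Nmu R X = \sum_(i <- emp_supp X) emp_meas R X i `^ (- (1 / 2)).
  rewrite /Nmu big_seq_cond [RHS]big_seq; apply: eq_bigl => i.
  case: (boolP (i \in emp_supp X)) => //= iX.
  by rewrite emp_meas_card divr_gt0 ?ltr0n ?card_level_gt0.
rewrite sqrt_norm NmuE emp_rademacher_walk !mulr_suml !mulr_sumr.
split; [rewrite -sumrB | rewrite -big_split /=]; rewrite !big_seq;
  apply: ler_sum => i iX; rewrite emp_meas_card;
  have [lo hi] := atom_bound R m _ hm (card_level_gt0 m X i iX).
- exact: lo.
- exact: hi.
Qed.
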